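(* Let $m\ge1$, $\tau_1\ge\tau_2\ge\dots\ge\tau_m>0$, $b_1,\dots,b_m>0$, and $\psi(u)=\frac12u^2+\sum_{j=1}^mb_j\sqrt{\tau_j-u^2}$ for $0\le u<\sqrt{\tau_m}$. Then: (1) $\psi$ has at most one critical point $u_0\in(0,\sqrt{\tau_m})$; if $u_0<u<\sqrt{\tau_m}$ then $\psi'(u)<0$ and $\psi''(u)<0$, while $\psi'(u)>0$ on $(0,u_0)$; and there is at most one $u_1\in(0,u_0)$ with $\psi''(u_1)=0$. (2) If $u_0$ exists, then $\psi'(u)=-u\int_{u_0}^u\sum_{j=1}^m\frac{b_js}{(\tau_j-s^2)^{3/2}}\,ds$ for all $0<u<\sqrt{\tau_m}$; if $u_0$ does not exist, then $|\psi'(u)|\ge u\int_0^u\sum_{j=1}^m\frac{b_js}{(\tau_j-s^2)^{3/2}}\,ds$ for all $0<u<\sqrt{\tau_m}$. (3) If $\sum_{j=1}^m b_j/\sqrt{\tau_j}\le\frac12$, then $\psi'(u)\ge\frac14u$ for all $0<u<\frac12\sqrt{\tau_m}$. If $\sum_{j=1}^m b_j/\sqrt{\tau_j}\ge2$, then $\psi'(u)\le-u$ for all $0<u<\sqrt{\tau_m}$. *)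

From Stdlib Require Import Reals Lra.
From Coquelicot Require Import Coquelicot.
Open Scope R_scope.

(* sum1 m f = f 1 + f 2 + ... + f m  (1-based, as in the paper) *)
Fixpoint sum1 (m : nat) (f : nat -> R) : R :=
  match m with
  | O => 0
  | S k => sum1 k f + f (S k)
  end.

Definition psi (m : nat) (tau b : nat -> R) (u : R) : R :=
  / 2 * u ^ 2 + sum1 m (fun j => b j * sqrt (tau j - u ^ 2)).

Definition kern (m : nat) (tau b : nat -> R) (s : R) : R :=
  sum1 m (fun j => b j * s / Rpower (tau j - s ^ 2) (3 / 2)).

(* With g(u) = sum_j b_j / sqrt (tau_j - u^2) one has psi'(u) = u (1 - g(u)) and
   psi''(u) = 1 - (g(u) + u g'(u)), where g' is the integrand [kern].  On
   [0, sqrt tau_m) both g and g + u g' are strictly increasing, and g blows up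
   at sqrt tau_m.  Hence the critical points of psi are the solutions of
   g = 1: there is at most one, and there is one as soon as g(0) < 1.  Part (2)
   is the fundamental theorem of calculus for g, and part (3) compares g(u)
   with g(0) = sum_j b_j / sqrt tau_j, using tau_j - u^2 >= (2/3)^2 tau_j when
   u < sqrt tau_m / 2. *)

From Stdlib Require Import Reals Lra Lia Ranalysis5.
From Coquelicot Require Import Coquelicot.
Open Scope R_scope.

Lemma sum1_ext m f f' :
  (forall j, (1 <= j <= m)%nat -> f j = f' j) -> sum1 m f = sum1 m f'.
Proof.
  induction m as [|m IH]; intros H; simpl; [reflexivity|].
  rewrite IH, H; [reflexivity|lia|intros; apply H; lia].
Qed.

Lemma sum1_0 m : sum1 m (fun _ => 0) = 0.
Proof. induction m as [|m IH]; simpl; [|rewrite IH]; lra. Qed.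

Lemma sum1_scal m c f : sum1 m (fun j => c * f j) = c * sum1 m f.
Proof. induction m as [|m IH]; simpl; [|rewrite IH]; ring. Qed.

Lemma sum1_le m f f' :
  (forall j, (1 <= j <= m)%nat -> f j <= f' j) -> sum1 m f <= sum1 m f'.
Proof.
  induction m as [|m IH]; intros H; simpl; [lra|].
  assert (sum1 m f <= sum1 m f') by (apply IH; intros; apply H; lia).
  assert (f (S m) <= f' (S m)) by (apply H; lia).
  lra.
Qed.

Lemma sum1_lt m f f' : (1 <= m)%nat ->
  (forall j, (1 <= j <= m)%nat -> f j < f' j) -> sum1 m f < sum1 m f'.
Proof.
  destruct m as [|m]; [lia|]; intros _ H; simpl.
  assert (sum1 m f <= sum1 m f') by (apply sum1_le; intros; apply Rlt_le, H; lia).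
  assert (f (S m) < f' (S m)) by (apply H; lia).
  lra.
Qed.

Lemma sum1_ge_last m f : (1 <= m)%nat ->
  (forall j, (1 <= j <= m)%nat -> 0 <= f j) -> f m <= sum1 m f.
Proof.
  destruct m as [|m]; [lia|]; intros _ H; simpl.
  assert (sum1 m (fun _ => 0) <= sum1 m f) by (apply sum1_le; intros; apply H; lia).
  rewrite sum1_0 in *; lra.
Qed.

Lemma is_derive_sum1 m (f df : nat -> R -> R) x :
  (forall j, (1 <= j <= m)%nat -> is_derive (f j) x (df j x)) ->
  is_derive (fun y => sum1 m (fun j => f j y)) x (sum1 m (fun j => df j x)).
Proof.
  induction m as [|m IH]; intros H; simpl.
  - apply (is_derive_const 0).
  - apply (is_derive_plus (fun y => sum1 m (fun j => f j y)) (f (S m))).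
    + apply IH; intros; apply H; lia.
    + apply H; lia.
Qed.

Lemma continuous_sum1 m (f : nat -> R -> R) x :
  (forall j, (1 <= j <= m)%nat -> continuous (f j) x) ->
  continuous (fun y => sum1 m (fun j => f j y)) x.
Proof.
  induction m as [|m IH]; intros H; simpl.
  - apply continuous_const.
  - apply (continuous_plus (fun y => sum1 m (fun j => f j y)) (f (S m))).
    + apply IH; intros; apply H; lia.
    + apply H; lia.
Qed.

Lemma nonincreasing_le_last (m : nat) (tau : nat -> R) :
  (forall j, (1 <= j)%nat -> (j < m)%nat -> tau (S j) <= tau j) ->
  forall j, (1 <= j <= m)%nat -> tau m <= tau j.
Proof.
  intros Hdec j Hj.
  assert (Hd : forall d, (j + d <= m)%nat -> tau (j + d)%nat <= tau j).
  { induction d as [|d IH]; intros Hd; [rewrite Nat.add_0_r; lra|].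
    rewrite Nat.add_succ_r.
    assert (tau (S (j + d)) <= tau (j + d)%nat) by (apply Hdec; lia).
    assert (tau (j + d)%nat <= tau j) by (apply IH; lia).
    lra. }
  replace m with (j + (m - j))%nat by lia.
  apply Hd; lia.
Qed.

Lemma strict_incr_inj (f : R -> R) (P : R -> Prop) :
  (forall x y, P x -> P y -> x < y -> f x < f y) ->
  forall x y, P x -> P y -> f x = f y -> x = y.
Proof.
  intros Hf x y Px Py Hxy.
  destruct (Rtotal_order x y) as [H|[H|H]]; auto;
    [pose proof (Hf x y Px Py H) | pose proof (Hf y x Py Px H)]; lra.
Qed.

Lemma sq_lt_of_lt_sqrt u t : 0 <= u < sqrt t -> u ^ 2 < t.
Proof. intros Hu. apply sqrt_lt_0_alt. rewrite sqrt_pow2; lra. Qed.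

Lemma Rpower_3_2 x : 0 < x -> Rpower x (3 / 2) = x * sqrt x.
Proof.
  intros Hx. replace (3 / 2) with (1 + / 2) by field.
  rewrite Rpower_plus, Rpower_1, Rpower_sqrt; auto.
Qed.

(* [Rpower x y] is [exp (y * ln x)], hence positive even for junk bases [x <= 0]. *)
Lemma Rpower_gt_0 x y : 0 < Rpower x y.
Proof. apply exp_pos. Qed.

Section SqrtSubSq.

Variables (c t : R).

Lemma is_derive_scal_sqrt_sub_sq u : u ^ 2 < t ->
  is_derive (fun x => c * sqrt (t - x ^ 2)) u (- u * (c / sqrt (t - u ^ 2))).
Proof.
  intros Hu. assert (0 < sqrt (t - u ^ 2)) by (apply sqrt_lt_R0; lra).
  auto_derive; replace (t + - (u * (u * 1))) with (t - u ^ 2) by ring; [lra|field; lra].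
Qed.

Lemma is_derive_scal_inv_sqrt_sub_sq u : u ^ 2 < t ->
  is_derive (fun x => c / sqrt (t - x ^ 2)) u (c * u / Rpower (t - u ^ 2) (3 / 2)).
Proof.
  intros Hu. assert (0 < sqrt (t - u ^ 2)) by (apply sqrt_lt_R0; lra).
  rewrite Rpower_3_2 by lra.
  auto_derive; replace (t + - (u * (u * 1))) with (t - u ^ 2) by ring; [lra|].
  replace ((t - u ^ 2) * sqrt (t - u ^ 2))
    with (sqrt (t - u ^ 2) * sqrt (t - u ^ 2) * sqrt (t - u ^ 2))
    by (rewrite sqrt_sqrt; lra).
  field; lra.
Qed.

Lemma continuous_scal_div_Rpower_sub_sq u : u ^ 2 < t ->
  continuous (fun x => c * x / Rpower (t - x ^ 2) (3 / 2)) u.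
Proof.
  intros Hu. apply (ex_derive_continuous (K := R_AbsRing) (V := R_NormedModule)).
  (* [auto_derive] knows [exp] and [ln] but not [Rpower]. *)
  unfold Rpower. auto_derive.
  repeat split; [lra|apply Rgt_not_eq, exp_pos].
Qed.

Lemma inv_sqrt_sub_sq_lt x y : 0 <= x < y -> y ^ 2 < t ->
  / sqrt (t - x ^ 2) < / sqrt (t - y ^ 2).
Proof.
  intros Hxy Hy. apply Rinv_lt_contravar.
  - apply Rmult_lt_0_compat; apply sqrt_lt_R0; nra.
  - apply sqrt_lt_1_alt; nra.
Qed.

Lemma sq_div_Rpower_sub_sq_le x y : 0 <= x <= y -> y ^ 2 < t ->
  x ^ 2 / Rpower (t - x ^ 2) (3 / 2) <= y ^ 2 / Rpower (t - y ^ 2) (3 / 2).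
Proof.
  intros Hxy Hy. unfold Rdiv.
  apply Rmult_le_compat; [nra|apply Rlt_le, Rinv_0_lt_compat, Rpower_gt_0|nra|].
  apply Rinv_le_contravar; [apply Rpower_gt_0|].
  apply Rle_Rpower_l; nra.
Qed.

Lemma inv_sqrt_sub_sq_le u : 0 < t -> 4 * u ^ 2 <= t ->
  / sqrt (t - u ^ 2) <= 3 / 2 * / sqrt t.
Proof.
  intros Ht Hu. assert (0 < sqrt (t - u ^ 2)) by (apply sqrt_lt_R0; nra).
  assert (Hs : sqrt t <= 3 / 2 * sqrt (t - u ^ 2)).
  { rewrite <- (sqrt_pow2 (3 / 2 * sqrt (t - u ^ 2))) by lra.
    apply sqrt_le_1_alt. rewrite Rpow_mult_distr, pow2_sqrt; nra. }
  replace (/ sqrt (t - u ^ 2)) with (3 / 2 * / (3 / 2 * sqrt (t - u ^ 2))) by (field; lra).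
  apply Rmult_le_compat_l; [lra|].
  apply Rinv_le_contravar; [apply sqrt_lt_R0|]; lra.
Qed.

End SqrtSubSq.

Section Psi.

Variables (m : nat) (tau b : nat -> R).
Hypothesis m_ge_1 : (1 <= m)%nat.
Hypothesis tau_m_pos : 0 < tau m.
Hypothesis tau_m_le : forall j, (1 <= j <= m)%nat -> tau m <= tau j.
Hypothesis b_pos : forall j, (1 <= j <= m)%nat -> 0 < b j.

Local Notation T := (sqrt (tau m)).

Definition inv_sqrt_sum (u : R) : R := sum1 m (fun j => b j / sqrt (tau j - u ^ 2)).

Lemma sq_lt_tau u j : u ^ 2 < tau m -> (1 <= j <= m)%nat -> u ^ 2 < tau j.
Proof. intros Hu Hj. specialize (tau_m_le j Hj). lra. Qed.

Lemma is_derive_psi u : u ^ 2 < tau m ->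
  is_derive (psi m tau b) u (u * (1 - inv_sqrt_sum u)).
Proof.
  intros Hu. unfold psi, inv_sqrt_sum.
  replace (u * (1 - sum1 m (fun j => b j / sqrt (tau j - u ^ 2))))
    with (u + - u * sum1 m (fun j => b j / sqrt (tau j - u ^ 2))) by ring.
  rewrite <- sum1_scal.
  apply (is_derive_plus (fun x => / 2 * x ^ 2)); [auto_derive; [auto|field]|].
  apply (is_derive_sum1 m (fun j x => b j * sqrt (tau j - x ^ 2))
                          (fun j x => - x * (b j / sqrt (tau j - x ^ 2)))).
  intros j Hj. apply is_derive_scal_sqrt_sub_sq, sq_lt_tau; auto.
Qed.

Lemma is_derive_inv_sqrt_sum u : u ^ 2 < tau m ->
  is_derive inv_sqrt_sum u (kern m tau b u).
Proof.
  intros Hu.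
  apply (is_derive_sum1 m (fun j x => b j / sqrt (tau j - x ^ 2))
                          (fun j x => b j * x / Rpower (tau j - x ^ 2) (3 / 2))).
  intros j Hj. apply is_derive_scal_inv_sqrt_sub_sq, sq_lt_tau; auto.
Qed.

Lemma continuous_kern u : u ^ 2 < tau m -> continuous (kern m tau b) u.
Proof.
  intros Hu.
  apply (continuous_sum1 m (fun j x => b j * x / Rpower (tau j - x ^ 2) (3 / 2))).
  intros j Hj. apply continuous_scal_div_Rpower_sub_sq, sq_lt_tau; auto.
Qed.

Lemma Derive_psi u : 0 < u < T ->
  Derive (psi m tau b) u = u * (1 - inv_sqrt_sum u).
Proof. intros Hu. apply is_derive_unique, is_derive_psi, sq_lt_of_lt_sqrt; lra. Qed.

Lemma Derive2_psi u : 0 < u < T ->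
  Derive (Derive (psi m tau b)) u = 1 - (inv_sqrt_sum u + u * kern m tau b u).
Proof.
  intros Hu.
  rewrite (Derive_ext_loc _ (fun x => x * (1 - inv_sqrt_sum x))).
  2: { apply (locally_interval _ u 0 T); simpl; try lra.
       intros x Hx0 HxT. apply Derive_psi; lra. }
  apply is_derive_unique.
  replace (1 - (inv_sqrt_sum u + u * kern m tau b u))
    with (1 * (1 - inv_sqrt_sum u) + u * (0 - kern m tau b u)) by ring.
  apply (is_derive_mult (fun x => x) (fun x => 1 - inv_sqrt_sum x)).
  - apply (is_derive_id (K := R_AbsRing)).
  - apply (is_derive_minus (fun _ => 1));
      [apply (is_derive_const (K := R_AbsRing) (V := R_NormedModule))|].
    apply is_derive_inv_sqrt_sum, sq_lt_of_lt_sqrt; lra.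
  - intros; apply Rmult_comm.
Qed.

Lemma inv_sqrt_sum_0 : inv_sqrt_sum 0 = sum1 m (fun j => b j / sqrt (tau j)).
Proof.
  apply sum1_ext. intros j _. replace (tau j - 0 ^ 2) with (tau j) by ring. reflexivity.
Qed.

Lemma inv_sqrt_sum_lt x y : 0 <= x < y -> y < T -> inv_sqrt_sum x < inv_sqrt_sum y.
Proof.
  intros Hxy Hy. assert (Hy2 : y ^ 2 < tau m) by (apply sq_lt_of_lt_sqrt; lra).
  apply sum1_lt; auto. intros j Hj. unfold Rdiv.
  apply Rmult_lt_compat_l; [auto|].
  apply inv_sqrt_sub_sq_lt, sq_lt_tau; auto.
Qed.

Lemma kern_pos u : 0 < u -> 0 < kern m tau b u.
Proof.
  intros Hu. apply (Rle_lt_trans _ (sum1 m (fun _ => 0))); [rewrite sum1_0; lra|].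
  apply sum1_lt; auto. intros j Hj. unfold Rdiv.
  apply Rmult_lt_0_compat; [apply Rmult_lt_0_compat; auto|].
  apply Rinv_0_lt_compat, Rpower_gt_0.
Qed.

Lemma psi_curvature_lt x y : 0 <= x < y -> y < T ->
  inv_sqrt_sum x + x * kern m tau b x < inv_sqrt_sum y + y * kern m tau b y.
Proof.
  intros Hxy Hy. assert (Hy2 : y ^ 2 < tau m) by (apply sq_lt_of_lt_sqrt; lra).
  assert (Hk : x * kern m tau b x <= y * kern m tau b y).
  { unfold kern. rewrite <- !sum1_scal. apply sum1_le. intros j Hj.
    replace (x * (b j * x / Rpower (tau j - x ^ 2) (3 / 2)))
      with (b j * (x ^ 2 / Rpower (tau j - x ^ 2) (3 / 2))) by (unfold Rdiv; ring).
    replace (y * (b j * y / Rpower (tau j - y ^ 2) (3 / 2)))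
      with (b j * (y ^ 2 / Rpower (tau j - y ^ 2) (3 / 2))) by (unfold Rdiv; ring).
    apply Rmult_le_compat_l; [apply Rlt_le; auto|].
    apply sq_div_Rpower_sub_sq_le; [lra|apply sq_lt_tau; auto]. }
  pose proof (inv_sqrt_sum_lt x y Hxy Hy). lra.
Qed.

Lemma RInt_kern x y : 0 <= x < T -> 0 <= y < T ->
  RInt (kern m tau b) x y = inv_sqrt_sum y - inv_sqrt_sum x.
Proof.
  intros Hx Hy.
  assert (Hxy : forall s, Rmin x y <= s <= Rmax x y -> s ^ 2 < tau m).
  { intros s Hs. apply sq_lt_of_lt_sqrt.
    pose proof (Rmin_glb x y 0). pose proof (Rmax_lub_lt x y T). lra. }
  apply is_RInt_unique.
  apply (is_RInt_derive (V := R_CompleteNormedModule) inv_sqrt_sum).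
  - intros s Hs. apply is_derive_inv_sqrt_sum, Hxy, Hs.
  - intros s Hs. apply continuous_kern, Hxy, Hs.
Qed.

Lemma inv_sqrt_sum_gt_1 : exists v, 0 < v < T /\ 1 < inv_sqrt_sum v.
Proof.
  assert (Hbm : 0 < b m) by (apply b_pos; lia).
  set (eps := Rmin (b m ^ 2 / 4) (tau m / 2)).
  assert (Heps : 0 < eps) by (apply Rmin_glb_lt; nra).
  assert (Heps_b : eps <= b m ^ 2 / 4) by apply Rmin_l.
  assert (Heps_tau : eps <= tau m / 2) by apply Rmin_r.
  set (v := sqrt (tau m - eps)).
  assert (Hv : v ^ 2 = tau m - eps) by (apply pow2_sqrt; lra).
  exists v. split; [split; [apply sqrt_lt_R0|apply sqrt_lt_1_alt]; lra|].
  assert (Hlast : b m / sqrt (tau m - v ^ 2) <= inv_sqrt_sum v).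
  { apply (sum1_ge_last m (fun j => b j / sqrt (tau j - v ^ 2))); auto.
    intros j Hj. apply Rlt_le, Rdiv_lt_0_compat; [auto|].
    apply sqrt_lt_R0. pose proof (tau_m_le j Hj). lra. }
  rewrite Hv in Hlast. replace (tau m - (tau m - eps)) with eps in Hlast by ring.
  assert (Hs : 0 < sqrt eps <= b m / 2).
  { split; [apply sqrt_lt_R0; lra|].
    rewrite <- (sqrt_pow2 (b m / 2)) by lra. apply sqrt_le_1_alt. lra. }
  assert (2 <= b m / sqrt eps).
  { apply (Rmult_le_reg_r (sqrt eps)); [lra|].
    unfold Rdiv. rewrite Rmult_assoc, Rinv_l; lra. }
  lra.
Qed.

Lemma inv_sqrt_sum_eq_1 : inv_sqrt_sum 0 < 1 ->
  exists u0, 0 < u0 < T /\ inv_sqrt_sum u0 = 1.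
Proof.
  intros H0. destruct inv_sqrt_sum_gt_1 as [v [Hv Hgv]].
  destruct (IVT_interv (fun x => inv_sqrt_sum x - 1) 0 v) as [z [Hz Hgz]]; try lra.
  - intros x Hx. apply continuity_pt_filterlim.
    apply (ex_derive_continuous (K := R_AbsRing) (V := R_NormedModule)
                                (fun x => inv_sqrt_sum x - 1)).
    apply (ex_derive_minus (K := R_AbsRing) (V := R_NormedModule));
      [|apply ex_derive_const].
    exists (kern m tau b x). apply is_derive_inv_sqrt_sum, sq_lt_of_lt_sqrt; lra.
  - exists z. assert (z <> 0) by (intros ->; lra). split; lra.
Qed.

Lemma inv_sqrt_sum_le_3_2 u : 0 <= u < / 2 * T ->
  inv_sqrt_sum u <= 3 / 2 * inv_sqrt_sum 0.
Proof.
  intros Hu. assert (HT : T * T = tau m) by (apply sqrt_sqrt; lra).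
  assert (Hu2 : 4 * u ^ 2 <= tau m) by nra.
  unfold inv_sqrt_sum. rewrite <- sum1_scal. apply sum1_le. intros j Hj.
  replace (tau j - 0 ^ 2) with (tau j) by ring.
  replace (3 / 2 * (b j / sqrt (tau j))) with (b j * (3 / 2 * / sqrt (tau j)))
    by (unfold Rdiv; ring).
  unfold Rdiv.
  apply Rmult_le_compat_l; [apply Rlt_le; auto|].
  pose proof (tau_m_le j Hj). apply inv_sqrt_sub_sq_le; lra.
Qed.

Lemma Derive_psi_eq_0 u : 0 < u < T ->
  Derive (psi m tau b) u = 0 <-> inv_sqrt_sum u = 1.
Proof.
  intros Hu. rewrite Derive_psi by auto. split; intros H.
  - destruct (Rmult_integral _ _ H); lra.
  - rewrite H; ring.
Qed.

Lemma inv_sqrt_sum_eq_1_unique u0 u0' : 0 < u0 < T -> 0 < u0' < T ->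
  inv_sqrt_sum u0 = 1 -> inv_sqrt_sum u0' = 1 -> u0 = u0'.
Proof.
  intros Hu0 Hu0' Hg Hg'.
  apply (strict_incr_inj inv_sqrt_sum (fun u => 0 < u < T)); [|auto|auto|congruence].
  intros x y Hx Hy Hxy. apply inv_sqrt_sum_lt; lra.
Qed.

Lemma Derive2_psi_eq_0_unique u1 u1' : 0 < u1 < T -> 0 < u1' < T ->
  Derive (Derive (psi m tau b)) u1 = 0 -> Derive (Derive (psi m tau b)) u1' = 0 ->
  u1 = u1'.
Proof.
  intros Hu1 Hu1'. rewrite !Derive2_psi by auto. intros H1 H1'.
  apply (strict_incr_inj (fun u => inv_sqrt_sum u + u * kern m tau b u) (fun u => 0 < u < T));
    [|auto|auto|lra].
  intros x y Hx Hy Hxy. apply psi_curvature_lt; lra.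
Qed.

Lemma Derive_psi_lt_0 u0 u : 0 < u0 -> inv_sqrt_sum u0 = 1 -> u0 < u < T ->
  Derive (psi m tau b) u < 0 /\ Derive (Derive (psi m tau b)) u < 0.
Proof.
  intros Hu0 Hg Hu. rewrite Derive_psi, Derive2_psi by lra.
  pose proof (inv_sqrt_sum_lt u0 u ltac:(lra) ltac:(lra)).
  pose proof (kern_pos u ltac:(lra)).
  split; nra.
Qed.

Lemma Derive_psi_gt_0 u0 u : inv_sqrt_sum u0 = 1 -> 0 < u < u0 -> u0 < T ->
  Derive (psi m tau b) u > 0.
Proof.
  intros Hg Hu Hu0. rewrite Derive_psi by lra.
  pose proof (inv_sqrt_sum_lt u u0 ltac:(lra) Hu0). nra.
Qed.

Lemma Derive_psi_RInt u0 u : 0 < u0 < T -> inv_sqrt_sum u0 = 1 -> 0 < u < T ->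
  Derive (psi m tau b) u = - u * RInt (kern m tau b) u0 u.
Proof. intros Hu0 Hg Hu. rewrite Derive_psi, RInt_kern, Hg by lra. ring. Qed.

Lemma Rabs_Derive_psi_ge u : 1 <= inv_sqrt_sum 0 -> 0 < u < T ->
  Rabs (Derive (psi m tau b) u) >= u * RInt (kern m tau b) 0 u.
Proof.
  intros Hg0 Hu. rewrite Derive_psi, RInt_kern by lra.
  pose proof (Rabs_maj2 (u * (1 - inv_sqrt_sum u))). nra.
Qed.

Lemma Derive_psi_ge_quarter u : inv_sqrt_sum 0 <= / 2 -> 0 < u < / 2 * T ->
  Derive (psi m tau b) u >= / 4 * u.
Proof.
  intros Hg0 Hu. rewrite Derive_psi by lra.
  pose proof (inv_sqrt_sum_le_3_2 u ltac:(lra)). nra.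
Qed.

Lemma Derive_psi_le_opp u : 2 <= inv_sqrt_sum 0 -> 0 < u < T ->
  Derive (psi m tau b) u <= - u.
Proof.
  intros Hg0 Hu. rewrite Derive_psi by lra.
  pose proof (inv_sqrt_sum_lt 0 u ltac:(lra) ltac:(lra)). nra.
Qed.

End Psi.

Theorem lemma7p1 (m : nat) (tau b : nat -> R)
  (Hm : (1 <= m)%nat)
  (Htau_dec : forall j : nat, (1 <= j)%nat -> (j < m)%nat -> tau (S j) <= tau j)
  (Htau_pos : 0 < tau m)
  (Hb : forall j : nat, (1 <= j)%nat -> (j <= m)%nat -> 0 < b j) :
  let psi' := Derive (psi m tau b) in
  let psi'' := Derive (Derive (psi m tau b)) in
  let crit := fun u0 => 0 < u0 < sqrt (tau m) /\ psi' u0 = 0 in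
  (* (1) *)
  ((forall u0 u0', crit u0 -> crit u0' -> u0 = u0') /\
   (forall u0, crit u0 ->
      (forall u, u0 < u < sqrt (tau m) -> psi' u < 0 /\ psi'' u < 0) /\
      (forall u, 0 < u < u0 -> psi' u > 0) /\
      (forall u1 u1', 0 < u1 < u0 -> psi'' u1 = 0 ->
                      0 < u1' < u0 -> psi'' u1' = 0 -> u1 = u1'))) /\
  (* (2) *)
  ((forall u0, crit u0 ->
      forall u, 0 < u < sqrt (tau m) ->
        psi' u = - u * RInt (kern m tau b) u0 u) /\
   ((~ exists u0, crit u0) ->
      forall u, 0 < u < sqrt (tau m) ->
        Rabs (psi' u) >= u * RInt (kern m tau b) 0 u)) /\
  (* (3) *)
  ((sum1 m (fun j => b j / sqrt (tau j)) <= / 2 ->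
      forall u, 0 < u < / 2 * sqrt (tau m) -> psi' u >= / 4 * u) /\
   (sum1 m (fun j => b j / sqrt (tau j)) >= 2 ->
      forall u, 0 < u < sqrt (tau m) -> psi' u <= - u)).
Proof.
  intros psi' psi'' crit; subst psi' psi''.
  pose proof (nonincreasing_le_last m tau Htau_dec) as tau_le.
  assert (b_pos : forall j, (1 <= j <= m)%nat -> 0 < b j) by (intros j Hj; apply Hb; lia).
  assert (crit_g : forall u, crit u ->
    0 < u < sqrt (tau m) /\ inv_sqrt_sum m tau b u = 1).
  { intros u [Hu H]. split; [auto|]. apply (Derive_psi_eq_0 m tau b); auto. }
  rewrite <- (inv_sqrt_sum_0 m tau b).
  split; [split|split; [split|split]].
  - intros u0 u0' [Hu0 Hg]%crit_g [Hu0' Hg']%crit_g.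
    apply (inv_sqrt_sum_eq_1_unique m tau b); auto.
  - intros u0 [Hu0 Hg]%crit_g. split; [|split].
    + intros u Hu. apply Derive_psi_lt_0 with (u0 := u0); auto; lra.
    + intros u Hu. apply Derive_psi_gt_0 with (u0 := u0); auto; lra.
    + intros u1 u1' Hu1 H1 Hu1' H1'.
      apply (Derive2_psi_eq_0_unique m tau b); auto; lra.
  - intros u0 [Hu0 Hg]%crit_g u Hu. apply Derive_psi_RInt; auto.
  - intros Hno u Hu. apply Rabs_Derive_psi_ge; auto.
    destruct (Rlt_le_dec (inv_sqrt_sum m tau b 0) 1) as [Hlt|]; [exfalso|auto].
    destruct (inv_sqrt_sum_eq_1 m tau b) as [z [Hz Hgz]]; auto.
    apply Hno. exists z. split; [auto|]. apply Derive_psi_eq_0; auto.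
  - intros Hg0 u Hu. apply Derive_psi_ge_quarter; auto.
  - intros Hg0 u Hu. apply Derive_psi_le_opp; auto; lra.
Qed.
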